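(* Let $X$ be an $n$-dimensional real normed space and let $Y \subseteq X$ be a $k$-dimensional subspace, where $1 \leq k \leq n-1$. Suppose that $x_0 \in X \setminus Y$ and there exists a minimal $I$-set for $Y$ with respect to $x_0$ of cardinality $l$. Then $\dim P_Y(x_0) \leq k-l+1$.
   Context: $P_Y(x)=\{y\in Y:\|x-y\|=\mathrm{dist}(x,Y)\}$ is the (convex) set of best approximations of $x$ in $Y$, and $\dim$ denotes affine dimension. For $x_0\in X\setminus Y$, a set of functionals $\{f_1,\dots,f_l\}\subseteq \mathrm{ext}\,B_{X^*}$ (extreme points of the dual unit ball) is an $I$-set for $Y$ with respect to $x_0$ if there exist $y_0\in P_Y(x_0)$ and positive reals $\alpha_1,\dots,\alpha_l$ with $\sum_i\alpha_i=1$ such that $f_i(x_0-y_0)=\|x_0-y_0\|$ for all $i$ and $\sum_{i=1}^l\alpha_i f_i(y)=0$ for all $y\in Y$. An $I$-set is minimal if no proper subset of it is an $I$-set for $Y$ with respect to $x_0$. *)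

From HB Require Import structures.
From mathcomp Require Import all_boot all_order all_algebra.
From mathcomp Require Import all_classical all_reals all_analysis.
Set Implicit Arguments. Unset Strict Implicit. Unset Printing Implicit Defensive.
Import Order.TTheory GRing.Theory Num.Theory.
Import numFieldNormedType.Exports.
Local Open Scope classical_set_scope.
Local Open Scope ring_scope.

Section Defs.
Variables (R : realType) (V : normedModType R).

Definition lin_indep (m : nat) (b : 'I_m -> V) : Prop :=
  forall c : 'I_m -> R, \sum_(i < m) c i *: b i = 0 -> forall i, c i = 0.

Definition span_of (m : nat) (b : 'I_m -> V) : set V :=
  [set x | exists c : 'I_m -> R, x = \sum_(i < m) c i *: b i].

Definition has_dim (n : nat) : Prop :=
  exists e : 'I_n -> V, lin_indep e /\ span_of e = setT.

Definition subspace_dim (Y : set V) (k : nat) : Prop :=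
  exists b : 'I_k -> V, lin_indep b /\ Y = span_of b.

Definition dist_to (x : V) (Y : set V) : R := inf [set `|x - y| | y in Y].

Definition bestapprox (Y : set V) (x : V) : set V :=
  [set y | Y y /\ `|x - y| = dist_to x Y].

Definition lin_functional (f : V -> R) : Prop :=
  forall (a : R) (x y : V), f (a *: x + y) = a * f x + f y.

(* closed unit ball of the dual space X^* (in finite dimension every
   linear functional is continuous; ||f|| <= 1 iff |f x| <= ||x||) *)
Definition dual_ball : set (V -> R) :=
  [set f | lin_functional f /\ forall x, `|f x| <= `|x|].

Definition ext_points (B : set (V -> R)) : set (V -> R) :=
  [set f | B f /\ forall (g h : V -> R) (t : R), B g -> B h -> 0 < t < 1 ->
     f = (fun x => t * g x + (1 - t) * h x) -> g = h].

Definition Iset_family (Y : set V) (x0 : V) (m : nat) (g : 'I_m -> V -> R) :=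
  (forall i, ext_points dual_ball (g i)) /\
  exists y0, bestapprox Y x0 y0 /\
  exists alpha : 'I_m -> R, (forall i, 0 < alpha i) /\
    \sum_(i < m) alpha i = 1 /\
    (forall i, g i (x0 - y0) = `|x0 - y0|) /\
    (forall y, Y y -> \sum_(i < m) alpha i * g i y = 0).

Definition is_Iset (Y : set V) (x0 : V) (S : set (V -> R)) : Prop :=
  exists (m : nat) (g : 'I_m -> V -> R),
    injective g /\ range g = S /\ Iset_family Y x0 g.

Definition minimal_Iset (Y : set V) (x0 : V) (S : set (V -> R)) : Prop :=
  is_Iset Y x0 S /\ forall S', S' `<` S -> ~ is_Iset Y x0 S'.

Definition has_card (S : set (V -> R)) (l : nat) : Prop :=
  exists f : 'I_l -> V -> R, injective f /\ range f = S.

Definition aff_indep (m : nat) (p : 'I_m.+1 -> V) : Prop :=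
  lin_indep (fun i : 'I_m => p (lift ord0 i) - p ord0).

Definition affdim_le (S : set V) (d : int) : Prop :=
  forall (m : nat) (p : 'I_m.+1 -> V), (forall i, S (p i)) -> aff_indep p ->
    (m%:Z <= d).

End Defs.

From HB Require Import structures.
From mathcomp Require Import all_boot all_order all_algebra.
From mathcomp Require Import all_classical all_reals all_analysis.
From mathcomp Require Import zify.
Import Order.TTheory GRing.Theory Num.Theory.
Import numFieldNormedType.Exports.
Local Open Scope classical_set_scope.
Local Open Scope ring_scope.
Set Implicit Arguments. Unset Strict Implicit.

(* Let g_1, ..., g_m be a minimal I-set, with weights al and best
   approximation y0, and d := |x0 - y0|.  For every p in P_Y(x0) the
   al-average of the g_j (x0 - p) equals d while each term is at most d, so
   g_j (x0 - p) = d for all j: the differences of points of P_Y(x0) lie in the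
   common kernel of the g_j in Y.  By minimality al spans the linear relations
   between the restrictions of the g_j to Y (moving the weights along another
   relation until one vanishes would leave a smaller I-set), so these
   restrictions have rank at least m - 1, the common kernel has dimension at
   most k - m + 1, and m >= l. *)

Section LinearFunctional.
Variables (R : realType) (V : normedModType R) (f : V -> R).
Hypothesis f_lin : lin_functional f.

Lemma lin_functional0 : f 0 = 0.
Proof. by have := f_lin (-1) 0 0; rewrite scaler0 addr0 mulN1r addNr. Qed.

Lemma lin_functionalD x y : f (x + y) = f x + f y.
Proof. by have := f_lin 1 x y; rewrite scale1r mul1r. Qed.

Lemma lin_functionalZ a x : f (a *: x) = a * f x.
Proof. by have := f_lin a x 0; rewrite addr0 lin_functional0 addr0. Qed.

Lemma lin_functionalB x y : f (x - y) = f x - f y.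
Proof. by rewrite lin_functionalD -scaleN1r lin_functionalZ mulN1r. Qed.

Lemma lin_functional_sum m (c : 'I_m -> R) (b : 'I_m -> V) :
  f (\sum_(i < m) c i *: b i) = \sum_(i < m) c i * f (b i).
Proof.
rewrite (big_morph f lin_functionalD lin_functional0).
by apply: eq_bigr => i _; rewrite lin_functionalZ.
Qed.

End LinearFunctional.

Lemma span_ofB (R : realType) (V : normedModType R) m (b : 'I_m -> V) y z :
  span_of b y -> span_of b z -> span_of b (y - z).
Proof.
move=> [c ->] [c' ->]; exists (fun i => c i - c' i).
by rewrite -sumrB; apply: eq_bigr => i _; rewrite scalerBl.
Qed.

Lemma has_card_range_leq (R : realType) (V : normedModType R) m l
    (g : 'I_m -> V -> R) :
  has_card (range g) l -> (l <= m)%N.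
Proof.
move=> [f [f_inj rf]].
have f_g i : exists j, g j = f i.
  have : range f (f i) by exists i.
  by rewrite rf => -[j _ <-]; exists j.
have [h hK] := choice f_g.
have h_inj : injective h by move=> i i' e; apply: f_inj; rewrite -!hK e.
by have := leq_card _ h_inj; rewrite !card_ord.
Qed.

(* Moving from [al] along the direction [- gam] of zero total mass, one must
   leave the open positive orthant; [t] is the exit time. *)
Lemma ray_exits_orthant (R : realFieldType) m (al gam : 'I_m -> R) i :
  (forall j, 0 < al j) -> \sum_j gam j = 0 -> gam i != 0 ->
  exists t, exists2 i0, al i0 = t * gam i0 & forall j, t * gam j <= al j.
Proof.
move=> al_gt0 gam_sum gam_i.
have [i1 gam_i1] : exists i1, 0 < gam i1.
  apply: contrapT => /forallNP gam_le0.
  have le0 j : 0 <= - gam j by rewrite oppr_ge0 leNgt; apply/negP/gam_le0.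
  have := @psumr_eq0P _ _ predT _ (fun j _ => le0 j).
  by rewrite sumrN gam_sum oppr0 => /(_ erefl i isT) /eqP; rewrite oppr_eq0 (negPf gam_i).
have [i0 gam_i0 i0_min] := @arg_minP _ R _ i1 (fun j => 0 < gam j) (fun j => al j / gam j) gam_i1.
exists (al i0 / gam i0); exists i0; first by rewrite divfK ?gt_eqF.
move=> j; have [gam_j|gam_j] := ltrP 0 (gam j).
  by rewrite -ler_pdivlMr //; apply: i0_min.
apply: le_trans (ltW (al_gt0 j)).
by rewrite pmulr_rle0 // divr_gt0.
Qed.

Section ISets.
Variables (R : realType) (V : normedModType R) (Y : set V) (x0 : V).

Lemma is_Iset_support m (g : 'I_m -> V -> R) (y0 : V) (del : 'I_m -> R) :
  injective g -> (forall j, ext_points (@dual_ball R V) (g j)) -> bestapprox Y x0 y0 ->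
  (forall j, 0 <= del j) -> \sum_(j < m) del j = 1 ->
  (forall j, g j (x0 - y0) = `|x0 - y0|) ->
  (forall y, Y y -> \sum_(j < m) del j * g j y = 0) ->
  is_Iset Y x0 (g @` [set j | 0 < del j]).
Proof.
move=> g_inj g_ext y0_best del_ge0 del_sum g_y0 del_Y.
pose A : {set 'I_m} := [set j | 0 < del j]%SET.
have sum_A (F : 'I_m -> R) : (forall j, del j = 0 -> F j = 0) ->
    \sum_(j < #|A|) F (enum_val j) = \sum_j F j.
  move=> F0; rewrite -(big_enum_val F) /= big_mkcond /=.
  apply: eq_bigr => j _; rewrite inE; case: ifP => // /negbT del_j.
  by rewrite F0 //; apply/eqP; rewrite eq_le del_ge0 andbT leNgt.
exists #|A|, (g \o enum_val); split; first by move=> j j' /g_inj /enum_val_inj.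
split.
  rewrite eqEsubset; split=> h [j].
    by move=> _ <-; exists (enum_val j) => //; have := enum_valP j; rewrite inE.
  move=> del_j <-; have Aj : j \in A by rewrite inE.
  by exists (enum_rank_in Aj j) => //=; rewrite enum_rankK_in.
split; first by move=> j; apply: g_ext.
exists y0; split=> //; exists (del \o enum_val); split.
  by move=> j; have := enum_valP j; rewrite inE.
split; first by rewrite (sum_A del).
split=> [j|y Yy]; first exact: g_y0.
by rewrite (sum_A (fun j => del j * g j y)) ?del_Y // => j ->; rewrite mul0r.
Qed.

Lemma minimal_Iset_relation m (g : 'I_m -> V -> R) (y0 : V) (al : 'I_m -> R) :
  injective g -> (forall j, ext_points (@dual_ball R V) (g j)) -> bestapprox Y x0 y0 ->
  (forall j, 0 < al j) -> \sum_(j < m) al j = 1 ->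
  (forall j, g j (x0 - y0) = `|x0 - y0|) ->
  (forall y, Y y -> \sum_(j < m) al j * g j y = 0) ->
  (forall S', S' `<` range g -> ~ is_Iset Y x0 S') ->
  forall u : 'I_m -> R, (forall y, Y y -> \sum_(j < m) u j * g j y = 0) ->
  forall i, u i = (\sum_(j < m) u j) * al i.
Proof.
move=> g_inj g_ext y0_best al_gt0 al_sum g_y0 al_Y g_min u u_Y i.
set s := \sum_(j < m) u j.
pose gam j := u j - s * al j.
apply/eqP; rewrite -subr_eq0 -/(gam i); apply/negPn/negP => gam_i.
have gam_sum : \sum_j gam j = 0 by rewrite sumrB -mulr_sumr al_sum mulr1 subrr.
have comb_Y (d e : 'I_m -> R) c :
    (forall y, Y y -> \sum_j d j * g j y = 0) ->
    (forall y, Y y -> \sum_j e j * g j y = 0) ->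
    forall y, Y y -> \sum_j (d j - c * e j) * g j y = 0.
  move=> d_Y e_Y y Yy; under eq_bigr => j _ do rewrite mulrBl -mulrA.
  by rewrite sumrB -mulr_sumr d_Y // e_Y // mulr0 subr0.
have gam_Y := comb_Y u al s u_Y al_Y.
have [t [i0 al_i0 t_le]] := ray_exits_orthant al_gt0 gam_sum gam_i.
pose del j := al j - t * gam j.
have del_sum : \sum_j del j = 1 by rewrite sumrB -mulr_sumr gam_sum mulr0 subr0.
apply: (g_min (g @` [set j | 0 < del j])).
  split=> [_ [j _ <-]|]; first by exists j.
  move=> /(_ (g i0) (ex_intro2 _ _ i0 I erefl)) [j del_j /g_inj ji0].
  by move: del_j; rewrite ji0 /del /= al_i0 subrr ltxx.
apply: (is_Iset_support g_inj g_ext y0_best _ del_sum g_y0 (comb_Y _ _ t al_Y gam_Y)).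
by move=> j; rewrite subr_ge0.
Qed.

Lemma Iset_norming m (g : 'I_m -> V -> R) (y0 p : V) (al : 'I_m -> R) :
  (forall j, @dual_ball R V (g j)) ->
  (forall j, 0 < al j) -> \sum_(j < m) al j = 1 ->
  (forall j, g j (x0 - y0) = `|x0 - y0|) ->
  (forall y, Y y -> \sum_(j < m) al j * g j y = 0) ->
  Y (y0 - p) -> `|x0 - p| = `|x0 - y0| ->
  forall j, g j (x0 - p) = `|x0 - y0|.
Proof.
move=> g_ball al_gt0 al_sum g_y0 al_Y Yp p_dist j.
set d := `|x0 - y0|.
have g_lin j' := (g_ball j').1.
have comb : \sum_j' al j' * (d - g j' (x0 - p)) = 0.
  have -> : x0 - p = (x0 - y0) + (y0 - p) by rewrite addrA subrK.
  under eq_bigr => j' _ do rewrite lin_functionalD // mulrBr mulrDr g_y0 opprD addrA subrr sub0r.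
  by rewrite sumrN al_Y // oppr0.
have term_ge0 j' : 0 <= al j' * (d - g j' (x0 - p)).
  apply: mulr_ge0; first exact: ltW.
  rewrite subr_ge0 /d -p_dist.
  exact: le_trans (ler_norm _) ((g_ball j').2 _).
have := @psumr_eq0P _ _ predT _ (fun j _ => term_ge0 j) comb j isT.
by move/eqP; rewrite mulf_eq0 gt_eqF //= subr_eq0 => /eqP <-.
Qed.

End ISets.

Section Coordinates.
Variables (R : realType) (V : normedModType R) (k : nat) (b : 'I_k -> V).

Definition eval_mx m (g : 'I_m -> V -> R) : 'M[R]_(m, k) := \matrix_(j, t) g j (b t).

Definition coord_vec M (C : 'M[R]_(M, k)) (i : 'I_M) : V := \sum_t C i t *: b t.

Lemma span_of_coord_vec M (v : 'I_M -> V) :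
  (forall i, span_of b (v i)) -> exists C : 'M[R]_(M, k), v = coord_vec C.
Proof.
move=> /choice [c vc]; exists (\matrix_(i, t) c i t); apply/funext => i.
by rewrite vc; apply: eq_bigr => t _; rewrite mxE.
Qed.

Lemma coord_vec_comb M (C : 'M[R]_(M, k)) (v : 'rV_M) :
  \sum_i v 0 i *: coord_vec C i = \sum_t (v *m C) 0 t *: b t.
Proof.
under eq_bigr => i _ do rewrite scaler_sumr.
rewrite exchange_big /=; apply: eq_bigr => t _.
by rewrite mxE scaler_suml; apply: eq_bigr => i _; rewrite scalerA.
Qed.

Lemma lin_indep_row_free M (C : 'M[R]_(M, k)) :
  lin_indep (coord_vec C) -> row_free C.
Proof.
move=> C_indep; apply: inj_row_free => v vC0; apply/rowP => i; rewrite mxE.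
apply: C_indep i; rewrite coord_vec_comb vC0.
by apply: big1 => t _; rewrite mxE scale0r.
Qed.

Lemma eval_mx_coord m (g : 'I_m -> V -> R) M (C : 'M[R]_(M, k)) :
  (forall j, lin_functional (g j)) ->
  (C *m (eval_mx g)^T) = \matrix_(i, j) g j (coord_vec C i).
Proof.
move=> g_lin; apply/matrixP => i j; rewrite !mxE lin_functional_sum //.
by apply: eq_bigr => t _; rewrite !mxE mulrC.
Qed.

Lemma mul_eval_mx_eq0 m (g : 'I_m -> V -> R) (u : 'rV_m) :
  (forall j, lin_functional (g j)) -> u *m eval_mx g = 0 ->
  forall y, span_of b y -> \sum_j u 0 j * g j y = 0.
Proof.
move=> g_lin uF0 _ [c ->].
under eq_bigr => j _ do rewrite lin_functional_sum // mulr_sumr.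
rewrite exchange_big /=; apply: big1 => t _.
have := congr1 (fun w : 'rV_k => w 0 t) uF0; rewrite /eval_mx !mxE => uF0t.
rewrite -[RHS](mulr0 (c t)) -[in RHS]uF0t mulr_sumr.
by apply: eq_bigr => j _; rewrite mxE mulrCA.
Qed.

End Coordinates.

Lemma kermx_line_rank (F : fieldType) m n (A : 'M[F]_(m, n)) (a : 'rV_m) :
  (forall u : 'rV_m, u *m A = 0 -> (u <= a)%MS) -> (m <= \rank A + 1)%N.
Proof.
move=> ker_a; have : (\rank (kermx A) <= 1)%N.
  apply: leq_trans (rank_leq_row a); apply: mxrankS; apply/row_subP => r.
  by apply: ker_a; rewrite -row_mul mulmx_ker row0.
by rewrite mxrank_ker; lia.
Qed.

Theorem mainTheorem12 (R : realType) (V : normedModType R) (n k l : nat)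
  (Y : set V) (x0 : V) (S : set (V -> R)) :
  has_dim V n -> subspace_dim Y k -> (1 <= k)%N -> (k <= n.-1)%N ->
  ~ Y x0 ->
  minimal_Iset Y x0 S -> has_card S l ->
  affdim_le (bestapprox Y x0) (k%:Z - l%:Z + 1).
Proof.
move=> _ [b [_ ->]] _ _ _ [[m [g [g_inj [<- fam]]]] g_min] /has_card_range_leq l_le_m.
case: fam => g_ext [y0 [y0_best [al [al_gt0 [al_sum [g_y0 al_Y]]]]]].
have g_lin j : lin_functional (g j) by case: (g_ext j) => -[].
move=> M p p_best p_indep.
pose v i := p (lift ord0 i) - p ord0.
have [C vC] := span_of_coord_vec (fun i => span_ofB (p_best (lift ord0 i)).1 (p_best ord0).1).
have g_v i j : g j (v i) = 0.
  have norming i' := Iset_norming (fun j => (g_ext j).1) al_gt0 al_sum g_y0 al_Y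
    (span_ofB y0_best.1 (p_best i').1) (etrans (p_best i').2 (esym y0_best.2)).
  have -> : v i = (x0 - p ord0) - (x0 - p (lift ord0 i)).
    by rewrite /v opprB [RHS]addrC addrA subrK.
  by rewrite lin_functionalB // !norming subrr.
have rank_C : \rank C = M.
  by apply/eqP; apply: (lin_indep_row_free (b := b)); rewrite -vC.
have CF0 : C *m (eval_mx b g)^T = 0.
  by rewrite eval_mx_coord //; apply/matrixP => i j; rewrite !mxE -vC g_v.
have rank_F : (m <= \rank (eval_mx b g) + 1)%N.
  apply: (kermx_line_rank (a := \row_i al i)) => u /(mul_eval_mx_eq0 g_lin) u_Y.
  apply/sub_rVP; exists (\sum_j u 0 j); apply/rowP => i; rewrite !mxE.
  exact: minimal_Iset_relation g_y0 al_Y g_min _ u_Y i.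
by have := mulmx0_rank_max CF0; rewrite mxrank_tr rank_C; lia.
Qed.
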